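(* Let $\mathcal{G}=(\mathcal{V},\mathcal{E})$ be a directed graph and $f:2^{\mathcal{E}}\to\mathbb{R}_+$ a normalized, nonnegative, monotone nondecreasing submodular function, and define the node function $h:2^{\mathcal{V}}\to\mathbb{R}_+$ by $h(X)=f(\delta^+(X))$. Then: (1) $h$ is not always submodular, i.e., there exist such $\mathcal{G}$ and $f$ for which $h$ is not submodular; (2) $h$ is always subadditive: $h(A)+h(B)\ge h(A\cup B)$ for all $A,B\subseteq\mathcal{V}$.
   Context: For $X\subseteq\mathcal{V}$, $\delta^+(X)=\{(v,u)\in\mathcal{E}: v\in X,\ u\notin X\}$ is the set of edges leaving $X$. A set function $f$ is normalized if $f(\emptyset)=0$, monotone nondecreasing if $A\subseteq B$ implies $f(A)\le f(B)$, and submodular if $f(A)+f(B)\ge f(A\cup B)+f(A\cap B)$ for all $A,B$. *)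

From mathcomp Require Import all_boot all_order all_algebra.
Set Implicit Arguments. Unset Strict Implicit. Unset Printing Implicit Defensive.
Import Order.TTheory GRing.Theory Num.Theory.
Local Open Scope ring_scope.

(* A directed graph: finite vertex type V with edge set E : {set V * V};
   an edge (v,u) goes from v to u. Edge set functions are maps on subsets of E,
   given as functions on {set V*V}; their properties are required on subsets of E only. *)

Definition delta_plus (V : finType) (E : {set V * V}) (X : {set V}) : {set V * V} :=
  [set e in E | (e.1 \in X) && (e.2 \notin X)].

Section SetFun.
Variables (R : realFieldType) (T : finType) (D : {set T}) (f : {set T} -> R).
Definition normalized := f set0 = 0.
Definition nonneg_on := forall A : {set T}, A \subset D -> 0 <= f A.
Definition monotone_on := forall A B : {set T}, A \subset D -> B \subset D -> A \subset B -> f A <= f B.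
Definition submodular_on := forall A B : {set T}, A \subset D -> B \subset D ->
  f (A :|: B) + f (A :&: B) <= f A + f B.
Definition subadditive_on := forall A B : {set T}, A \subset D -> B \subset D ->
  f (A :|: B) <= f A + f B.
End SetFun.

Definition node_fun (R : realFieldType) (V : finType) (E : {set V * V})
  (f : {set V * V} -> R) : {set V} -> R := fun X => f (delta_plus E X).

Definition admissible (R : realFieldType) (V : finType) (E : {set V * V})
  (f : {set V * V} -> R) :=
  [/\ normalized f, nonneg_on E f, monotone_on E f & submodular_on E f].

From mathcomp Require Import all_boot all_order all_algebra.
Import Order.TTheory GRing.Theory Num.Theory.
Set Implicit Arguments. Unset Strict Implicit. Unset Printing Implicit Defensive.
Local Open Scope ring_scope.

(* Subadditivity holds because delta^+(A :|: B) is contained in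
   delta^+(A) :|: delta^+(B): by monotonicity and submodularity,
   h(A :|: B) <= f(delta^+ A :|: delta^+ B) <= h(A) + h(B) - f(delta^+ A :&: delta^+ B),
   and the last term is nonnegative.  Submodularity fails already for the
   indicator of nonemptiness on the graph with edges 1 -> 0 and 2 -> 3:
   for A = {0,1} and B = {1,2} only delta^+(A) is empty, so
   h(A) + h(B) = 1 < 2 = h(A :|: B) + h(A :&: B). *)

Lemma delta_plus_sub (V : finType) (E : {set V * V}) (A : {set V}) :
  delta_plus E A \subset E.
Proof. by apply/subsetP => e; rewrite inE => /andP[]. Qed.

Lemma delta_plusU (V : finType) (E : {set V * V}) (A B : {set V}) :
  delta_plus E (A :|: B) \subset delta_plus E A :|: delta_plus E B.
Proof.
apply/subsetP => -[x y]; rewrite !inE /= negb_or.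
by case/and3P => -> /orP[] -> /andP[-> ->]; rewrite ?orbT.
Qed.

Lemma nonneg_submodular_subadditive (R : realFieldType) (T : finType)
    (D : {set T}) (f : {set T} -> R) :
  nonneg_on D f -> submodular_on D f -> subadditive_on D f.
Proof.
move=> f_ge0 f_sub A B sAD sBD; apply: le_trans (f_sub A B sAD sBD).
by rewrite lerDl f_ge0 // (subset_trans (subsetIl A B)).
Qed.

Lemma node_fun_subadditive (R : realFieldType) (V : finType)
    (E : {set V * V}) (f : {set V * V} -> R) :
  admissible E f -> subadditive_on [set: V] (node_fun E f).
Proof.
case=> _ f_ge0 f_mono f_sub A B _ _; rewrite /node_fun.
have sAE := delta_plus_sub E A; have sBE := delta_plus_sub E B.
apply: le_trans (nonneg_submodular_subadditive f_ge0 f_sub sAE sBE).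
by apply: f_mono (delta_plusU E A B); rewrite ?delta_plus_sub ?subUset ?sAE.
Qed.

Definition nonempty_indicator (R : realFieldType) (T : finType) (S : {set T}) : R :=
  (S != set0)%:R.

Lemma admissible_nonempty_indicator (R : realFieldType) (V : finType)
    (E : {set V * V}) :
  admissible E (@nonempty_indicator R _).
Proof.
rewrite /nonempty_indicator; split=> [|A _|A B _ _ sAB|A B _ _].
- by rewrite /normalized eqxx.
- exact: ler0n.
- rewrite ler_nat; have [// | /set0Pn[x Ax]] := eqVneq A set0.
  suff /set0Pn-> : exists x, x \in B by [].
  by exists x; apply: subsetP Ax.
- have [-> | nA] := eqVneq A set0; first by rewrite set0U set0I eqxx add0r addr0.
  have [-> | nB] := eqVneq B set0; first by rewrite setU0 setI0 nA eqxx.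
  by rewrite -!natrD ler_nat leq_add ?leq_b1.
Qed.

Definition two_edge_graph : {set 'I_4 * 'I_4} := [set (1, 0); (2, 3)].

Lemma node_fun_not_submodular (R : realFieldType) :
  ~ submodular_on [set: 'I_4]
      (node_fun two_edge_graph (@nonempty_indicator R _)).
Proof.
move=> /(_ [set 0; 1] [set 1; 2] (subsetT _) (subsetT _)).
rewrite /node_fun /nonempty_indicator.
have -> : delta_plus two_edge_graph [set 0; 1] = set0.
  apply/setP => -[x y]; rewrite !inE /=.
  by case: x => [[|[|[|[|x]]]] hx]; case: y => [[|[|[|[|y]]]] hy].
have indicator_delta_eq1 X e : e \in delta_plus two_edge_graph X ->
    (delta_plus two_edge_graph X != set0)%:R = 1 :> R.
  by move=> eX; apply/eqP; rewrite pnatr_eq1 eqb1; apply/set0Pn; exists e.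
rewrite eqxx (indicator_delta_eq1 [set 1; 2] (2, 3)) ?inE //.
rewrite (indicator_delta_eq1 ([set 0; 1] :|: [set 1; 2]) (2, 3)) ?inE //.
rewrite (indicator_delta_eq1 ([set 0; 1] :&: [set 1; 2]) (1, 0)) ?inE //.
by rewrite lerD2r ler10.
Qed.

Theorem proposition1 (R : realFieldType) :
  (exists (V : finType) (E : {set V * V}) (f : {set V * V} -> R),
      admissible E f /\ ~ submodular_on [set: V] (node_fun E f)) /\
  (forall (V : finType) (E : {set V * V}) (f : {set V * V} -> R),
      admissible E f -> subadditive_on [set: V] (node_fun E f)).
Proof.
split; last exact: node_fun_subadditive.
exists 'I_4, two_edge_graph, (@nonempty_indicator R _); split.
  exact: admissible_nonempty_indicator.
exact: node_fun_not_submodular.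
Qed.
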